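(* Let $X_1,\dots,X_d$ be discrete random variables, $X_j\in\{0,\dots,r_j\}$, fix $M\subseteq\{1,\dots,d\}$, and assume complete independence of $(X_j)_{j\in M}$ with strictly positive joint probability vector $\pi=p(M)$. Let $\mathcal V=\bigcup_k\mathcal P(N_k)$ for a family of subsets $N_k\subsetneq M$, $a,b\subseteq M$ disjoint nonempty, $\mathcal A=\{t\subseteq M: t\cap a\ne\emptyset, t\cap b\ne\emptyset\}$, $\mathcal I\subseteq\mathcal V\cap\mathcal A$ and $\mathcal R=\mathcal V\setminus\mathcal I$. If $\mathcal H$ is a valid replacement for $\mathcal I$, then the matrix $Q_{\mathcal I\mathcal H\mid\mathcal R}=F_{\mathcal I\mathcal H}-F_{\mathcal I\mathcal R}F_{\mathcal R\mathcal R}^{-1}F_{\mathcal R\mathcal H}$ is non singular.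
   Context: $\mathcal P(\cdot)$ denotes the family of nonempty subsets. For $r\subseteq M$, $G_r=\bigotimes_{j\in M}G_j$ with $G_j$ the identity of order $r_j+1$ without its first column if $j\in r$ and $\mathbf 1_{r_j+1}$ otherwise. For disjoint $t,h$ and categories $j_h$ (all nonzero), $G_{t,h}(j_h)$ is the submatrix of $G_{t\cup h}$ formed by the columns with the variables in $h$ equal to $j_h$. $G_{\mathcal I}$ (resp. $G_{\mathcal R}$) juxtaposes $G_t$ for $t\in\mathcal I$ (resp. $\mathcal R$); $G_{\mathcal H}$ juxtaposes the blocks $G_{t,h}(j_h)$ for the elements $t\cup h$ of $\mathcal H$. $\Omega=\mathrm{diag}(\pi)-\pi\pi'$, $F_{\mathcal X\mathcal Y}=G_{\mathcal X}'\Omega G_{\mathcal Y}$. Let $\mathcal K$ be the family of maximal sets of $\mathcal I\cup\mathcal R$; for $t\in\mathcal I$, $\mathcal K(t)=\{m\in\mathcal K:t\subseteq m\}$, $\mathcal K(t,h)$ is the family of nonempty $\mathcal G\subseteq\mathcal K(t)$ with $h\cap\bigcap_{m\in\mathcal G}m=\emptyset$, and $\bar{\mathcal K}(t,h)=\mathcal P(\mathcal K)\setminus\mathcal K(t,h)$. $\mathcal H$ is a valid replacement for $\mathcal I$ if: (i) there is a one-to-one correspondence between $\mathcal I$ and $\mathcal H$ such that each $t\in\mathcal I$ corresponds to some $t\cup h\in\mathcal H$ with $t\cap h=\emptyset$, the variables of $h$ being fixed to given categories $j_h$ different from the reference category $0$; (ii) $\sum_{\mathcal G\in\mathcal K(t,h)}(-1)^{|\mathcal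 G|}\ne0$ for each such pair; (iii) there is a total order $\prec$ on $\mathcal I$ compatible with set inclusion such that for every $t\cup h\in\mathcal H$ and $\mathcal G\in\bar{\mathcal K}(t,h)$, the set $s=(\bigcap_{m\in\mathcal G}m)\cap(t\cup h)$ satisfies either $s\in\mathcal R$, or $s\in\mathcal I$ and $s\prec t$. *)

From mathcomp Require Import all_boot all_order all_algebra.
Set Implicit Arguments. Unset Strict Implicit. Unset Printing Implicit Defensive.
Import Order.TTheory GRing.Theory Num.Theory.
Local Open Scope ring_scope.

(* Variables X_j, j : 'I_d, with X_j in {0,...,r j}.  A (full) assignment of
   categories to all variables. *)
Definition assign (d : nat) (r : 'I_d -> nat) :=
  {dffun forall j : 'I_d, 'I_(r j).+1}.

(* Cells of the contingency table of the variables in M: assignments that are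
   0 (irrelevant) outside M.  These index the entries of pi = p(M). *)
Definition cell (d : nat) (r : 'I_d -> nat) (M : {set 'I_d}) :=
  {x : assign r | [forall j, (j \notin M) ==> (x j == ord0)]}.

Definition supp_is (d : nat) (r : 'I_d -> nat) (t : {set 'I_d}) (c : assign r) :=
  [forall j, (j \in t) == (c j != ord0)].

(* Column indices of the juxtaposed matrix G_S for a family S of sets:
   pairs (t, c), t in S, c a choice of nonzero categories for the variables
   of t (the columns of G_t = Kronecker product of identities without first
   column and vectors of ones). *)
Definition colT (d : nat) (r : 'I_d -> nat) (S : {set {set 'I_d}}) :=
  {p : {set 'I_d} * assign r | (p.1 \in S) && supp_is p.1 p.2}.

Definition cellv (d : nat) (r : 'I_d -> nat) (M : {set 'I_d})
  (i : 'I_#|{: cell r M}|) : cell r M := enum_val i.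
Definition colv (d : nat) (r : 'I_d -> nat) (S : {set {set 'I_d}})
  (k : 'I_#|{: colT r S}|) : colT r S := enum_val k.

Definition Gmx (R : nzRingType) (d : nat) (r : 'I_d -> nat) (M : {set 'I_d})
  (S : {set {set 'I_d}}) : 'M[R]_(#|{: cell r M}|, #|{: colT r S}|) :=
  \matrix_(i, k)
    (let x := val (cellv i) in let p := val (colv k) in
     if [forall j in p.1, x j == p.2 j] then 1 else 0).

(* G_H : for each t in I, the block G_{t,h}(j_h) with h = h t, j_h = jh t:
   columns of G_{t u h} whose variables in h are fixed to the categories j_h. *)
Definition GHmx (R : nzRingType) (d : nat) (r : 'I_d -> nat) (M : {set 'I_d})
  (I : {set {set 'I_d}}) (h : {set 'I_d} -> {set 'I_d})
  (jh : {set 'I_d} -> assign r) : 'M[R]_(#|{: cell r M}|, #|{: colT r I}|) :=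
  \matrix_(i, k)
    (let x := val (cellv i) in let p := val (colv k) in
     if [forall j in p.1, x j == p.2 j] && [forall j in h p.1, x j == jh p.1 j]
     then 1 else 0).

Definition Omega (R : nzRingType) (d : nat) (r : 'I_d -> nat) (M : {set 'I_d})
  (pi : cell r M -> R) : 'M[R]_(#|{: cell r M}|) :=
  diag_mx (\row_i pi (cellv i)) -
  (\col_i pi (cellv i)) *m (\col_i pi (cellv i))^T.

Definition marg (R : nzRingType) (d : nat) (r : 'I_d -> nat) (M : {set 'I_d})
  (pi : cell r M -> R) (j : 'I_d) (k : 'I_(r j).+1) : R :=
  \sum_(y : cell r M | val y j == k) pi y.

Definition Vfam (d : nat) (N : {set {set 'I_d}}) : {set {set 'I_d}} :=
  [set t : {set 'I_d} | (t != set0) && [exists n in N, t \subset n]].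

Definition Afam (d : nat) (M a b : {set 'I_d}) : {set {set 'I_d}} :=
  [set t : {set 'I_d} | [&& t \subset M, t :&: a != set0 & t :&: b != set0]].

Definition maxfam (d : nat) (F : {set {set 'I_d}}) : {set {set 'I_d}} :=
  [set m in F | [forall m' in F, (m \subset m') ==> (m' == m)]].

Definition Kt (d : nat) (K : {set {set 'I_d}}) (t : {set 'I_d}) :=
  [set m in K | t \subset m].

Definition Kth (d : nat) (K : {set {set 'I_d}}) (t h : {set 'I_d})
  : {set {set {set 'I_d}}} :=
  [set G in powerset (Kt K t) |
     (G != set0) && (h :&: \bigcap_(m in G) m == set0)].

Definition Kbar (d : nat) (K : {set {set 'I_d}}) (t h : {set 'I_d})
  : {set {set {set 'I_d}}} :=
  [set G in powerset K | (G != set0) && (G \notin Kth K t h)].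

(* H (given by h and jh, indexed by I) is a valid replacement for I,
   relative to R; the maximal sets K are those of I u R. *)
Definition valid_replacement (d : nat) (r : 'I_d -> nat) (M : {set 'I_d})
  (I Rf : {set {set 'I_d}}) (h : {set 'I_d} -> {set 'I_d})
  (jh : {set 'I_d} -> assign r) : Prop :=
  let K := maxfam (I :|: Rf) in
  (forall t, t \in I ->
     [/\ h t \subset M, [disjoint t & h t] &
         forall j, j \in h t -> jh t j != ord0]) /\
  (forall t, t \in I ->
     (\sum_(G in Kth K t (h t)) (-1) ^+ #|G| : int) != 0) /\
  (* (iii) total order on I compatible with inclusion, encoded by an
     injective rank function: s < t iff rk s < rk t *)
  (exists rk : {set 'I_d} -> nat,
     {in I &, injective rk} /\
     (forall s t, s \in I -> t \in I -> s \proper t -> (rk s < rk t)%N) /\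
     (forall t, t \in I -> forall G, G \in Kbar K t (h t) ->
        let s := (\bigcap_(m in G) m) :&: (t :|: h t) in
        s \in Rf \/ (s \in I /\ (rk s < rk t)%N))).

Definition Qmx (R : fieldType) (d : nat) (r : 'I_d -> nat) (M : {set 'I_d})
  (pi : cell r M -> R) (I Rf : {set {set 'I_d}}) (h : {set 'I_d} -> {set 'I_d})
  (jh : {set 'I_d} -> assign r) : 'M[R]_(#|{: colT r I}|) :=
  let Om := Omega pi in
  let GI := @Gmx R d r M I in
  let GR := @Gmx R d r M Rf in
  let GH := @GHmx R d r M I h jh in
  let F (m n : nat) (A : 'M[R]_(_, m)) (B : 'M[R]_(_, n)) := A^T *m Om *m B in
  F _ _ GI GH - F _ _ GI GR *m invmx (F _ _ GR GR) *m F _ _ GR GH.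

From mathcomp Require Import all_boot all_order all_algebra.
From mathcomp Require Import ring.
Set Implicit Arguments. Unset Strict Implicit. Unset Printing Implicit Defensive.
Import Order.TTheory GRing.Theory Num.Theory.
Local Open Scope ring_scope.

(* Let Q v = 0 and put e = G_H v - G_R b with b = F_RR^-1 F_RH v, so that e is
   uncorrelated under pi with every indicator 1{X_t = c}, t in V.  Independence
   makes the conditional expectation E[. | X_s] self-adjoint; hence when every
   nonempty subset of s lies in V, E[e | X_s] has zero variance and is constant.
   The alternating sum of these constants over the nonempty subfamilies G of the
   maximal sets K is, by inclusion-exclusion, G_R b minus a combination of the
   indicators of X on (t u h t) :&: \bigcap G.  Indicators with nonzero categories
   are linearly independent, so the coefficient of 1{X_t = c} vanishes; for the
   column (t, c) of largest rank with v_(t,c) <> 0, condition (iii) discards every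
   G outside K(t, h t), and the coefficient is
   - (sum_(G in K(t, h t)) (-1)^|G|) * v_(t,c) * P(X_(h t) = jh t) <> 0 by (ii).
   The same variance argument applied to G_R u shows that F_RR is invertible. *)

Section Assignments.
Variables (d : nat) (r : 'I_d -> nat).

Definition splice (s : {set 'I_d}) (x y : assign r) : assign r :=
  [ffun j => if j \in s then x j else y j].

Definition assign0 : assign r := [ffun j => ord0].

Lemma spliceE s x y j : splice s x y j = if j \in s then x j else y j.
Proof. by rewrite ffunE. Qed.

End Assignments.
Arguments assign0 {d r}.

Section AlternatingSum.
Variables (R : numDomainType) (T : finType) (F : {set {set T}}) (m0 : {set T}).
Variable phi : {set T} -> R.
Hypothesis m0F : m0 \in F.
Hypothesis phi_setIm0 : forall X, phi (X :&: m0) = phi X.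

Implicit Type G : {set {set T}}.

Let term G := (-1) ^+ #|G| * phi (\bigcap_(m in G) m).

(* Toggling m0 in G is a sign-reversing involution on the subfamilies of F. *)
Lemma signed_bigcap_sum_eq0 : \sum_(G in powerset F) term G = 0.
Proof.
pose tg G := if m0 \in G then G :\ m0 else m0 |: G.
have tgK : involutive tg.
  move=> G; rewrite /tg; case: (boolP (m0 \in G)) => m0G.
    by rewrite setD11 setD1K.
  by rewrite setU11 setU1K.
have term_tg G : term (tg G) = - term G.
  rewrite /term /tg; case: ifP => m0G.
    rewrite [#|G|](cardsD1 m0) m0G exprS mulN1r mulNr opprK.
    by rewrite [\bigcap_(m in G) m](big_setD1 _ m0G) /= setIC phi_setIm0.
  by rewrite cardsU1 m0G exprS mulN1r mulNr big_setU1 ?m0G //= setIC phi_setIm0.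
have tg_powerset G : (tg G \in powerset F) = (G \in powerset F).
  rewrite !powersetE /tg; case: ifP => m0G; last by rewrite subUset sub1set m0F.
  apply/idP/idP => [sGF|/subsetP sGF]; last first.
    by apply/subsetP => m /setD1P[_ /sGF].
  apply/subsetP => m mG; case: (eqVneq m m0) => [->//|mm0].
  by apply: (subsetP sGF); rewrite !inE mm0.
apply/eqP; rewrite -eqNr -sumrN.
rewrite [X in _ == X](reindex_inj (inv_inj tgK)) /=.
by apply/eqP/eq_big => G; rewrite ?tg_powerset // => _; rewrite term_tg.
Qed.

Lemma alternating_bigcap_sum :
  \sum_(G in powerset F | G != set0) (-1) ^+ #|G|.+1 * phi (\bigcap_(m in G) m)
  = phi setT.
Proof.
have := signed_bigcap_sum_eq0; rewrite /term (bigD1 set0) ?powersetE ?sub0set //=.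
rewrite cards0 big_set0 mul1r => /eqP; rewrite addr_eq0 => /eqP ->.
by rewrite -sumrN; apply: eq_bigr => G _; rewrite exprS mulN1r mulNr.
Qed.

End AlternatingSum.

Section MaximalSets.
Variable d : nat.
Implicit Types (F : {set {set 'I_d}}) (t : {set 'I_d}).

Lemma maxfam_sub F : maxfam F \subset F.
Proof. by apply/subsetP => m; rewrite inE => /andP[]. Qed.

Lemma maxfam_above F t : t \in F -> exists2 m, m \in maxfam F & t \subset m.
Proof.
move=> tF; have tt : (t \in F) && (t \subset t) by rewrite tF subxx.
have [m /andP[mF tm] mmax] :=
  @arg_maxnP _ t (fun m => (m \in F) && (t \subset m)) (fun m => #|m|) tt.
exists m => //; rewrite inE mF; apply/forall_inP => m' m'F; apply/implyP => mm'.
have /mmax : (m' \in F) && (t \subset m') by rewrite m'F (subset_trans tm mm').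
by rewrite eq_sym eqEcard mm'.
Qed.

End MaximalSets.

Section Columns.
Variables (d : nat) (r : 'I_d -> nat) (S : {set {set 'I_d}}).
Implicit Types k : colT r S.

Definition col_set k := (val k).1.
Definition col_cat k := (val k).2.

Lemma col_set_in k : col_set k \in S.
Proof. by case/andP: (valP k). Qed.

Lemma col_supp k : supp_is (col_set k) (col_cat k).
Proof. by case/andP: (valP k). Qed.

Lemma col_cat_neq0 k : [forall j in col_set k, col_cat k j != ord0].
Proof.
by apply/forall_inP => j jt; have /forallP/(_ j) := col_supp k; rewrite jt => /eqP <-.
Qed.

Lemma col_inj k k' : col_set k = col_set k' ->
  [forall j in col_set k, col_cat k j == col_cat k' j] -> k = k'.
Proof.
move=> et /forall_inP ec; have /forallP s1 := col_supp k; have /forallP s2 := col_supp k'.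
apply/val_inj/injective_projections => //; apply/ffunP => j.
case: (boolP (j \in col_set k)) => jt; first exact/eqP/ec.
move: (s1 j) (s2 j); rewrite -et (negbTE jt) /col_cat.
by do 2 move=> /eqP/esym/negbFE/eqP ->.
Qed.

Lemma exists_col B (z : assign r) : B \in S -> [forall j in B, z j != ord0] ->
  exists k, [/\ col_set k = B & forall j, j \in B -> col_cat k j = z j].
Proof.
move=> BS /forall_inP z_neq0.
have supp : supp_is B (splice B z assign0).
  by apply/forallP => j; rewrite !ffunE; case: ifP => jB //=; rewrite ?z_neq0 ?eqxx.
have kP : ((B, splice B z assign0).1 \in S) && supp_is B (splice B z assign0).
  by rewrite BS supp.
by exists (Sub (B, splice B z assign0) kP); split => // j jB; rewrite /col_cat /= ffunE jB.
Qed.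

End Columns.

Lemma sum_enum_val (V : nmodType) (T : finType) (F : T -> V) :
  \sum_(i < #|{: T}|) F (enum_val i) = \sum_x F x.
Proof. by rewrite -big_enum_val. Qed.

Lemma unitmx_ker0 (F : fieldType) n (A : 'M[F]_n) :
  (forall v : 'cV_n, A *m v = 0 -> v = 0) -> A \in unitmx.
Proof.
move=> ker0; rewrite -unitmx_tr -row_free_unit; apply: inj_row_free => v vA0.
have /ker0 v0 : A *m v^T = 0 by rewrite -[A]trmxK -trmx_mul vA0 trmx0.
by rewrite -[v]trmxK v0 trmx0.
Qed.

Section Independence.
Variables (R : realFieldType) (d : nat) (r : 'I_d -> nat) (M : {set 'I_d}).
Variable pi : cell r M -> R.
Hypothesis pi_gt0 : forall x, 0 < pi x.
Hypothesis pi_sum1 : \sum_x pi x = 1.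
Hypothesis pi_indep : forall x : cell r M, pi x = \prod_(j in M) marg pi (val x j).

Local Notation cellT := (cell r M).
Implicit Types (A B s : {set 'I_d}) (z zA zB : assign r) (x y : cellT).
Implicit Types (a b phi psi : cellT -> R).

Definition chi (A : {set 'I_d}) (z : assign r) (x : cellT) : R :=
  if [forall j in A, val x j == z j] then 1 else 0.

Lemma chi_set0 z x : chi set0 z x = 1.
Proof. by rewrite /chi; case: forall_inP => // nA; case: nA => j; rewrite inE. Qed.

Lemma csplice_subproof s (x y : cellT) :
  [forall j, (j \notin M) ==> (splice s (val x) (val y) j == ord0)].
Proof.
apply/forallP => j; apply/implyP => jM; rewrite spliceE.
by case: ifP => _; [move: (valP x) | move: (valP y)] => /forallP /(_ j) /implyP /(_ jM).
Qed.

Definition csplice s (x y : cellT) : cellT :=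
  Sub (splice s (val x) (val y)) (csplice_subproof s x y).

Lemma cspliceE s x y j : val (csplice s x y) j = if j \in s then val x j else val y j.
Proof. exact: spliceE. Qed.

Lemma cspliceK s x y : csplice s (csplice s x y) (csplice s y x) = x.
Proof. by apply/val_inj/ffunP => j; rewrite !cspliceE; case: (j \in s). Qed.

Lemma pi_csplice s x y : pi x * pi y = pi (csplice s x y) * pi (csplice s y x).
Proof.
rewrite !pi_indep -!big_split /=; apply: eq_bigr => j _.
by rewrite !cspliceE; case: (j \in s); rewrite // mulrC.
Qed.

(* Under independence, [condE s phi] is the conditional expectation of phi
   given the variables in s. *)
Definition condE s (phi : cellT -> R) (x : cellT) : R :=
  \sum_y pi y * phi (csplice s x y).
Definition prob A z := \sum_y pi y * chi A z y.

Lemma chi_csplice s A z x y :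
  chi A z (csplice s x y) = chi (A :&: s) z x * chi (A :\: s) z y.
Proof.
rewrite /chi.
have -> : [forall j in A, val (csplice s x y) j == z j] =
    [forall j in A :&: s, val x j == z j] && [forall j in A :\: s, val y j == z j].
  apply/forall_inP/andP => [H|[/forall_inP H1 /forall_inP H2] j jA].
    split; apply/forall_inP => j; rewrite !inE => /andP[];
      [move=> jA js | move=> js jA]; have := H j jA;
      by rewrite cspliceE ?js ?(negbTE js).
  rewrite cspliceE; case: ifP => js; [apply: H1 | apply: H2];
    by rewrite !inE ?js jA.
by do 2 case: [forall j in _, _]; rewrite /= ?mul1r ?mul0r.
Qed.

Lemma condE_chi s A z x : condE s (chi A z) x = prob (A :\: s) z * chi (A :&: s) z x.
Proof.
rewrite /condE /prob mulr_suml; apply: eq_bigr => y _.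
by rewrite chi_csplice mulrCA mulrC.
Qed.

Lemma eq_condE s phi psi : phi =1 psi -> condE s phi =1 condE s psi.
Proof. by move=> e x; apply: eq_bigr => y _; rewrite e. Qed.

Lemma condE_sum (T : finType) s (al : T -> R) (phi : T -> cellT -> R) x :
  condE s (fun x => \sum_i al i * phi i x) x = \sum_i al i * condE s (phi i) x.
Proof.
rewrite /condE; under eq_bigr do rewrite mulr_sumr; rewrite exchange_big.
by apply: eq_bigr => i _; rewrite mulr_sumr; apply: eq_bigr => y _; ring.
Qed.

Lemma condE_sum_chi (T : finType) s (al : T -> R) (A : T -> {set 'I_d})
    (z : T -> assign r) x :
  condE s (fun x => \sum_i al i * chi (A i) (z i) x) x =
  \sum_i (al i * prob (A i :\: s) (z i)) * chi (A i :&: s) (z i) x.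
Proof. by rewrite condE_sum; apply: eq_bigr => i _; rewrite condE_chi mulrA. Qed.

Definition ip (a b : cellT -> R) := \sum_x pi x * a x * b x.
Definition mean (a : cellT -> R) := \sum_x pi x * a x.
Definition cov a b := ip a b - mean a * mean b.

(* The involution (x, y) |-> (csplice s x y, csplice s y x) preserves
   pi x * pi y. *)
Lemma ip_condE s a b : ip (condE s a) b = ip a (condE s b).
Proof.
have pairE (F : cellT -> cellT -> R) : \sum_x \sum_y F x y = \sum_p F p.1 p.2.
  by rewrite pair_bigA.
rewrite /ip /condE.
under eq_bigr do rewrite mulrAC mulr_sumr.
under [RHS]eq_bigr do rewrite mulr_sumr.
rewrite !pairE.
pose sg (p : cellT * cellT) := (csplice s p.1 p.2, csplice s p.2 p.1).
have sgK : involutive sg by case=> x y; rewrite /sg /= !cspliceK.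
rewrite (reindex_inj (inv_inj sgK)) /=; apply: eq_bigr => [[x y]] _ /=.
rewrite cspliceK.
transitivity (pi (csplice s x y) * pi (csplice s y x) * (a x * b (csplice s x y))).
  by ring.
by rewrite -pi_csplice; ring.
Qed.

Lemma condE1 s x : condE s (fun _ => 1) x = 1.
Proof. by rewrite /condE -[RHS]pi_sum1; apply: eq_bigr => y _; rewrite mulr1. Qed.

Lemma mean_condE s a : mean (condE s a) = mean a.
Proof.
have ip1 c : mean c = ip c (fun _ => 1).
  by apply: eq_bigr => x _; rewrite mulr1.
rewrite !ip1 ip_condE; apply: eq_bigr => x _; by rewrite condE1.
Qed.

Lemma cov_condE s a b : cov (condE s a) b = cov a (condE s b).
Proof. by rewrite /cov ip_condE !mean_condE. Qed.

Lemma covC a b : cov a b = cov b a.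
Proof. by rewrite /cov /ip mulrC; congr (_ - _); apply: eq_bigr => x _; ring. Qed.

Lemma eq_covr a b b' : b =1 b' -> cov a b = cov a b'.
Proof.
by move=> e; rewrite /cov /ip /mean; congr (_ - _ * _); apply: eq_bigr => x _; rewrite e.
Qed.

Lemma eq_covl a a' b : a =1 a' -> cov a b = cov a' b.
Proof. by move=> e; rewrite covC (eq_covr _ e) covC. Qed.

Lemma cov_sumr (T : finType) a (al : T -> R) (phi : T -> cellT -> R) :
  cov a (fun x => \sum_i al i * phi i x) = \sum_i al i * cov a (phi i).
Proof.
have sumE (f : cellT -> R) :
    \sum_x f x * (\sum_i al i * phi i x) = \sum_i al i * \sum_x f x * phi i x.
  under eq_bigr do rewrite mulr_sumr; rewrite exchange_big.
  by apply: eq_bigr => i _; rewrite mulr_sumr; apply: eq_bigr => x _; ring.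
rewrite /cov /ip /mean sumE (sumE pi) mulr_sumr -sumrB.
by apply: eq_bigr => i _; ring.
Qed.

Lemma cov_cst a : cov a (fun _ => 1) = 0.
Proof.
rewrite /cov /ip /mean; under eq_bigr do rewrite mulr1.
by under [X in _ * X]eq_bigr do rewrite mulr1; rewrite pi_sum1 mulr1 subrr.
Qed.

Lemma cov_eq0_cst a : cov a a = 0 -> forall x, a x = mean a.
Proof.
have varE : cov a a = \sum_y pi y * (a y - mean a) ^+ 2.
  transitivity (\sum_y (pi y * a y * a y - (pi y * a y) * (2 * mean a))
                + \sum_y pi y * mean a ^+ 2); last first.
    by rewrite -big_split /=; apply: eq_bigr => y _; ring.
  rewrite sumrB -!mulr_suml pi_sum1 -/(mean a) /cov /ip; ring.
have nneg y : predT y -> 0 <= pi y * (a y - mean a) ^+ 2.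
  by move=> _; rewrite mulr_ge0 ?sqr_ge0 ?ltW.
rewrite varE => /(psumr_eq0P nneg) var0 x.
have /eqP := var0 x isT.
by rewrite mulf_eq0 gt_eqF //= sqrf_eq0 subr_eq0 => /eqP.
Qed.

Lemma prob_set0 z : prob set0 z = 1.
Proof. by rewrite /prob -[RHS]pi_sum1; apply: eq_bigr => y _; rewrite chi_set0 mulr1. Qed.

Lemma cell_of_subproof A (z : assign r) :
  [forall j, (j \notin M) ==> (splice (A :&: M) z assign0 j == ord0)].
Proof.
by apply/forallP => j; apply/implyP => jM; rewrite !ffunE inE (negbTE jM) andbF.
Qed.

Definition cell_of A (z : assign r) : cellT :=
  Sub (splice (A :&: M) z assign0) (cell_of_subproof A z).

Lemma cell_ofE A z j : val (cell_of A z) j = if j \in A :&: M then z j else ord0.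
Proof. by rewrite /= !ffunE. Qed.

Lemma chi_cell_of A z : A \subset M -> chi A z (cell_of A z) = 1.
Proof.
move=> AM; rewrite /chi; case: forall_inP => // nA; case: nA => j jA.
by rewrite cell_ofE inE jA (subsetP AM j jA).
Qed.

Lemma prob_gt0 A z : A \subset M -> 0 < prob A z.
Proof.
move=> AM; rewrite /prob (bigD1 (cell_of A z)) //= chi_cell_of // mulr1.
rewrite ltr_pwDl ?pi_gt0 // sumr_ge0 // => y _.
by apply: mulr_ge0; [exact: ltW | rewrite /chi; case: ifP].
Qed.

Lemma chi_cell_ofE A B zA zB : A \subset M -> [forall j in A, zA j != ord0] ->
  chi A zA (cell_of B zB) = if (A \subset B) && [forall j in A, zB j == zA j] then 1 else 0.
Proof.
move=> AM /forall_inP nz; rewrite /chi; congr (if _ then _ else _).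
apply/forall_inP/andP => [H|[/subsetP AB /forall_inP H] j jA]; last first.
  by rewrite cell_ofE inE AB ?(subsetP AM) //=; apply: H.
have AB : A \subset B.
  apply/subsetP => j jA; have := H j jA; rewrite cell_ofE inE.
  by case: (j \in B) => //= /eqP zA0; have := nz j jA; rewrite -zA0 eqxx.
split => //; apply/forall_inP => j jA; have := H j jA.
by rewrite cell_ofE inE (subsetP AB) ?(subsetP AM) // eq_sym.
Qed.

Section LinearIndependence.
Variables (T : finType) (al : T -> R) (A : T -> {set 'I_d}) (z : T -> assign r) (c : R).
Hypothesis A_sub : forall i, A i \subset M.
Hypothesis z_neq0 : forall i, [forall j in A i, z i j != ord0].
Hypothesis comb_cst : forall x, \sum_i al i * chi (A i) (z i) x = c.

Definition coef B zB := \sum_(i | (A i == B) && [forall j in B, zB j == z i j]) al i.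

Lemma sum_coef_subsets B zB : B \subset M ->
  \sum_(C : {set 'I_d} | C \subset B) coef C zB = c.
Proof.
move=> BM; rewrite -(comb_cst (cell_of B zB)).
rewrite (eq_bigr (fun i => if (A i \subset B) && [forall j in A i, zB j == z i j]
  then al i else 0)); last by move=> i _; rewrite chi_cell_ofE //; case: ifP;
  rewrite ?mulr1 ?mulr0.
rewrite -big_mkcond /= (partition_big A (fun C => C \subset B)) /=.
  apply: eq_bigr => C CB; apply: eq_bigl => i.
  by case: (eqVneq (A i) C) => [->|]; rewrite ?andbF ?andbT ?CB.
by move=> i /andP[].
Qed.

Lemma coef_set0 zB : coef set0 zB = c.
Proof.
rewrite -(sum_coef_subsets zB (sub0set M)) (big_pred1 set0) // => C.
by rewrite subset0.
Qed.

Lemma coef_eq0 B zB : B \subset M -> B != set0 -> coef B zB = 0.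
Proof.
have [n] := ubnP #|B|; elim: n B => // n IHn B /ltnSE leBn BM B0.
have := sum_coef_subsets zB BM; rewrite (bigD1 B) //= (bigD1 set0) /=; last first.
  by rewrite sub0set eq_sym B0.
rewrite coef_set0 big1 ?addr0 => [/eqP|C /andP[/andP[CB neCB] C0]].
  by rewrite -subr_eq0 addrK => /eqP.
have ltCB : (#|C| < #|B|)%N by rewrite proper_card // properEneq neCB.
by apply: IHn => //; [exact: leq_trans ltCB leBn | exact: subset_trans CB BM].
Qed.

End LinearIndependence.

Local Notation nC := #|{: cellT}|.

Lemma OmegaE i j :
  Omega pi i j = pi (cellv i) *+ (i == j) - pi (cellv i) * pi (cellv j).
Proof. by rewrite !mxE big_ord1 !mxE. Qed.

Lemma cov_mx p (A : 'M[R]_(nC, p)) (v : 'cV[R]_nC) k :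
  (A^T *m Omega pi *m v) k 0 =
  cov (fun x => A (enum_rank x) k) (fun x => v (enum_rank x) 0).
Proof.
rewrite /cov /ip /mean -!(@sum_enum_val _ cellT).
under eq_bigr do rewrite !enum_valK.
under [X in _ - X * _]eq_bigr do rewrite !enum_valK.
under [X in _ - _ * X]eq_bigr do rewrite !enum_valK.
rewrite mxE.
transitivity (\sum_(i < nC) \sum_j (A j k * pi (cellv j) * v i 0 *+ (j == i) -
    A j k * pi (cellv j) * (pi (cellv i) * v i 0))).
  apply: eq_bigr => i _; rewrite mxE mulr_suml; apply: eq_bigr => j _.
  by rewrite mxE OmegaE mulrBr mulrBl mulrnAr mulrnAl !mulrA.
rewrite exchange_big /=; under eq_bigr do rewrite sumrB.
rewrite sumrB; congr (_ - _).
  apply: eq_bigr => j _; rewrite (bigD1 j) //= eqxx mulr1n big1 ?addr0.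
    by rewrite [A j k * _]mulrC.
  by move=> i ne; rewrite eq_sym (negbTE ne) mulr0n.
rewrite mulr_suml; apply: eq_bigr => j _; rewrite mulr_sumr.
by apply: eq_bigr => i _; rewrite [A j k * _]mulrC.
Qed.

Lemma coef_col S (u : colT r S -> R) k :
  coef u (@col_set _ _ S) (@col_cat _ _ S) (col_set k) (col_cat k) = u k.
Proof.
rewrite /coef (big_pred1 k) // => k'; apply/andP/eqP => [[/eqP ek /forall_inP ec]|->].
  by apply: col_inj => //; apply/forall_inP => j j_in; rewrite eq_sym ec -?ek.
by split => //; apply/forall_inP.
Qed.

Lemma GmxE S i k :
  (@Gmx R d r M S) i k = chi (col_set (colv k)) (col_cat (colv k)) (cellv i).
Proof. by rewrite mxE. Qed.

Lemma Gmx_cov S (k : colT r S) (v : 'cV[R]_nC) :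
  ((@Gmx R d r M S)^T *m Omega pi *m v) (enum_rank k) 0 =
  cov (chi (col_set k) (col_cat k)) (fun x => v (enum_rank x) 0).
Proof. by rewrite cov_mx; apply: eq_covl => x; rewrite GmxE /colv /cellv !enum_rankK. Qed.

Lemma Gmx_mulE S (u : 'cV[R]_#|{: colT r S}|) x :
  ((@Gmx R d r M S) *m u) (enum_rank x) 0 =
  \sum_k u (enum_rank k) 0 * chi (col_set k) (col_cat k) x.
Proof.
rewrite mxE -(sum_enum_val (fun k => u (enum_rank k) 0 * _)).
by apply: eq_bigr => k _; rewrite GmxE /colv /cellv enum_valK enum_rankK mulrC.
Qed.

Section Replacement.
Variables (N I : {set {set 'I_d}}) (h : {set 'I_d} -> {set 'I_d}).
Variable jh : {set 'I_d} -> assign r.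
Local Notation V := (Vfam N).
Local Notation Rf := (V :\: I).
Local Notation K := (maxfam (I :|: Rf)).
Implicit Types (t : {set 'I_d}) (k : colT r I).
Hypothesis N_proper : forall n, n \in N -> n \proper M.
Hypothesis I_sub : I \subset V.
Hypothesis h_valid : forall t, t \in I ->
  [/\ h t \subset M, [disjoint t & h t] & forall j, j \in h t -> jh t j != ord0].
Hypothesis Kth_sign_neq0 : forall t, t \in I ->
  (\sum_(G in Kth K t (h t)) (-1) ^+ #|G| : int) != 0.
Variable rk : {set 'I_d} -> nat.
Hypothesis Kbar_cap : forall t, t \in I -> forall G, G \in Kbar K t (h t) ->
  let s := (\bigcap_(m in G) m) :&: (t :|: h t) in
  s \in Rf \/ (s \in I /\ (rk s < rk t)%N).

Lemma V_subM t : t \in V -> t \subset M.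
Proof.
rewrite inE => /andP[_ /exists_inP[n nN tn]].
exact: subset_trans tn (proper_sub (N_proper nN)).
Qed.

Lemma V_neq0 t : t \in V -> t != set0.
Proof. by rewrite inE => /andP[]. Qed.

Lemma V_down t t' : t \in V -> t' \subset t -> (t' == set0) || (t' \in V).
Proof.
rewrite inE => /andP[_ /exists_inP[n nN tn]] t't.
case: eqP => //= /eqP t'0; rewrite inE t'0; apply/exists_inP.
by exists n => //; apply: subset_trans t't tn.
Qed.

Lemma I_V t : t \in I -> t \in V.
Proof. exact: subsetP. Qed.

Lemma R_V t : t \in Rf -> t \in V.
Proof. by case/setDP. Qed.

Lemma K_V m : m \in K -> m \in V.
Proof.
move/(subsetP (maxfam_sub _)); rewrite in_setU in_setD.
by case: (boolP (m \in I)) => [/I_V|].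
Qed.

(* The column of G_H indexed by (t, c) is the indicator of
   {X_(t u h t) = (c, jh t)}. *)
Definition hset (k : colT r I) := col_set k :|: h (col_set k).
Definition hcat (k : colT r I) := splice (col_set k) (col_cat k) (jh (col_set k)).

Lemma hset_subM k : hset k \subset M.
Proof.
by have [hM _ _] := h_valid (col_set_in k); rewrite subUset hM V_subM ?I_V ?col_set_in.
Qed.

Lemma hcat_neq0 k : [forall j in hset k, hcat k j != ord0].
Proof.
have [_ _ jh_neq0] := h_valid (col_set_in k).
apply/forall_inP => j j_in; rewrite spliceE; case: ifP => jt.
  by move/forall_inP: (col_cat_neq0 k); apply.
by apply: jh_neq0; move: j_in; rewrite inE jt.
Qed.

Lemma GHmxE (i : 'I_nC) (k : 'I_#|{: colT r I}|) :
  (@GHmx R d r M I h jh) i k = chi (hset (colv k)) (hcat (colv k)) (cellv i).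
Proof.
have [_ dis _] := h_valid (col_set_in (colv k)).
rewrite mxE /chi; congr (if _ then _ else _).
apply/andP/forall_inP => [[/forall_inP H1 /forall_inP H2] j|H].
  rewrite inE spliceE => /orP[jt|jh']; first by rewrite jt H1.
  by rewrite (disjointFl dis jh') H2.
split; apply/forall_inP => j j_in; have := H j; rewrite inE spliceE j_in ?orbT.
  by apply.
by rewrite (disjointFl dis j_in); apply.
Qed.

Lemma GHmx_mulE (u : 'cV[R]_#|{: colT r I}|) x :
  ((@GHmx R d r M I h jh) *m u) (enum_rank x) 0 =
  \sum_k u (enum_rank k) 0 * chi (hset k) (hcat k) x.
Proof.
rewrite mxE -(sum_enum_val (fun k => u (enum_rank k) 0 * _)).
by apply: eq_bigr => k _; rewrite GHmxE /colv /cellv enum_valK enum_rankK mulrC.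
Qed.

Section Residual.
Variables (w : colT r I -> R) (be : colT r Rf -> R).

(* The vector G_H w - G_R be; the two hypotheses below say that G_I' Omega and
   G_R' Omega annihilate it. *)
Definition resid x := \sum_k w k * chi (hset k) (hcat k) x
  - \sum_(k : colT r Rf) be k * chi (col_set k) (col_cat k) x.

Hypothesis resid_covI : forall k : colT r I, cov (chi (col_set k) (col_cat k)) resid = 0.
Hypothesis resid_covR : forall k : colT r Rf, cov (chi (col_set k) (col_cat k)) resid = 0.

Lemma cov_resid_chi B z : (B == set0) || (B \in V) ->
  [forall j in B, z j != ord0] -> cov resid (chi B z) = 0.
Proof.
case/orP => [/eqP-> _|BV z_neq0].
  by rewrite (@eq_covr _ _ (fun _ => 1)) ?cov_cst // => x; apply: chi_set0.
have chi_col S (k : colT r S) : col_set k = B -> (forall j, j \in B -> col_cat k j = z j) ->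
    cov resid (chi B z) = cov (chi (col_set k) (col_cat k)) resid.
  move=> kB kz; rewrite covC; apply: eq_covl => x; rewrite /chi kB.
  by congr (if _ then _ else _); apply: eq_forallb_in => j jB; rewrite kz.
case: (boolP (B \in I)) => BI.
  by have [k [kB kz]] := exists_col BI z_neq0; rewrite (chi_col _ k).
have BR : B \in Rf by rewrite inE BI.
by have [k [kB kz]] := exists_col BR z_neq0; rewrite (chi_col _ k).
Qed.

Definition resid_idx := (colT r I + colT r Rf)%type.
Definition resid_coef (i : resid_idx) := match i with inl k => w k | inr k => - be k end.
Definition resid_set (i : resid_idx) :=
  match i with inl k => hset k | inr k => col_set k end.
Definition resid_cat (i : resid_idx) :=
  match i with inl k => hcat k | inr k => col_cat k end.

Lemma residE : resid =1 fun x => \sum_i resid_coef i * chi (resid_set i) (resid_cat i) x.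
Proof.
move=> x; rewrite /resid big_sumType /=; congr (_ + _).
by rewrite -sumrN; apply: eq_bigr => k _; rewrite mulNr.
Qed.

Lemma resid_cat_neq0 i : [forall j in resid_set i, resid_cat i j != ord0].
Proof. by case: i => k; [apply: hcat_neq0 | apply: col_cat_neq0]. Qed.

(* Conditioning on a set all of whose subsets are in V (or empty) keeps the
   residual in the span of indicators it is uncorrelated with, so the
   conditional expectation has zero variance. *)
Lemma condE_resid_cst s : (forall B, B \subset s -> (B == set0) || (B \in V)) ->
  forall x, condE s resid x = mean resid.
Proof.
move=> s_down x; rewrite -(mean_condE s resid); apply: cov_eq0_cst.
rewrite cov_condE (eq_covr _ (eq_condE _ (eq_condE _ residE))).
under eq_covr do rewrite (eq_condE _ (condE_sum_chi _ _ _ _)) condE_sum_chi.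
rewrite cov_sumr big1 // => i _; rewrite cov_resid_chi ?mulr0 //.
  by apply: s_down; rewrite -setIA setIid subsetIr.
apply/forall_inP => j; rewrite !inE => /andP[/andP[j_in _] _].
by move/forall_inP: (resid_cat_neq0 i); apply.
Qed.

Local Notation capG G := (\bigcap_(m in G) m).

Definition subfam (G : {set {set 'I_d}}) := (G \in powerset K) && (G != set0).

Lemma subfam_cap_down G : subfam G ->
  forall B, B \subset capG G -> (B == set0) || (B \in V).
Proof.
case/andP=> GK /set0Pn[m mG] B BG.
have mK : m \in K by move: GK; rewrite powersetE => /subsetP; apply.
exact: V_down (K_V mK) (subset_trans BG (bigcap_inf _ mG)).
Qed.

Definition ie_cst := \sum_(G | subfam G) (-1) ^+ #|G|.+1 * mean resid.

Lemma alternating_condE_chiR (k : colT r Rf) x :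
  \sum_(G | subfam G) (-1) ^+ #|G|.+1 *
    (prob (col_set k :\: capG G) (col_cat k) * chi (col_set k :&: capG G) (col_cat k) x)
  = chi (col_set k) (col_cat k) x.
Proof.
have kIR : col_set k \in I :|: Rf by rewrite inE col_set_in orbT.
have [m0 m0K km0] := maxfam_above kIR.
pose phi X := prob (col_set k :\: X) (col_cat k) * chi (col_set k :&: X) (col_cat k) x.
have phi_setIm0 X : phi (X :&: m0) = phi X.
  rewrite /phi setDIr; have /eqP -> : col_set k :\: m0 == set0 by rewrite setD_eq0.
  by rewrite setU0 setICA (setIidPl km0) setIC.
transitivity (phi setT); last by rewrite /phi setDT setIT prob_set0 mul1r.
by rewrite -(alternating_bigcap_sum m0K phi_setIm0).
Qed.

Definition ie_idx := ((colT r I * {set {set 'I_d}}) + colT r Rf)%type.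
Definition ie_coef (i : ie_idx) := match i with
  | inl (k, G) =>
      if subfam G then (-1) ^+ #|G|.+1 * (w k * prob (hset k :\: capG G) (hcat k)) else 0
  | inr k => - be k end.
Definition ie_set (i : ie_idx) :=
  match i with inl (k, G) => hset k :&: capG G | inr k => col_set k end.
Definition ie_cat (i : ie_idx) :=
  match i with inl (k, _) => hcat k | inr k => col_cat k end.

Lemma ie_set_subM i : ie_set i \subset M.
Proof.
case: i => [[k G]|k] /=; last exact/V_subM/R_V/col_set_in.
exact: subset_trans (subsetIl _ _) (hset_subM k).
Qed.

Lemma ie_cat_neq0 i : [forall j in ie_set i, ie_cat i j != ord0].
Proof.
case: i => [[k G]|k] /=; last exact: col_cat_neq0.
apply/forall_inP => j; rewrite inE => /andP[j_in _].
by move/forall_inP: (hcat_neq0 k); apply.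
Qed.

(* Inclusion-exclusion: the alternating sum over the subfamilies G of K of the
   constants condE (capG G) resid. *)
Lemma ie_expansion_cst x : \sum_i ie_coef i * chi (ie_set i) (ie_cat i) x = ie_cst.
Proof.
transitivity (\sum_(G | subfam G) (-1) ^+ #|G|.+1 * condE (capG G) resid x); last first.
  by apply: eq_bigr => G GK; rewrite condE_resid_cst //; apply: subfam_cap_down.
under [RHS]eq_bigr do rewrite (eq_condE _ residE) condE_sum_chi mulr_sumr.
rewrite exchange_big !big_sumType /=; congr (_ + _).
  transitivity (\sum_k \sum_G ie_coef (inl (k, G)) * chi (ie_set (inl (k, G))) (hcat k) x).
    by rewrite pair_bigA; apply: eq_bigr => -[k G].
  apply: eq_bigr => k _; rewrite [RHS]big_mkcond; apply: eq_bigr => G _ /=.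
  by case: ifP => _; rewrite ?mul0r // -mulrA.
apply: eq_bigr => k _; rewrite -alternating_condE_chiR mulr_sumr.
by apply: eq_bigr => G _; rewrite mulrCA !mulrA.
Qed.

Lemma Kth_cap t G : G \in Kth K t (h t) ->
  [/\ subfam G, t \subset capG G & h t :&: capG G = set0].
Proof.
rewrite inE powersetE => /andP[GKt /andP[G0 /eqP hG]].
have GK : G \subset K.
  by apply: subset_trans GKt _; apply/subsetP => m; rewrite inE => /andP[].
split => //; first by rewrite /subfam powersetE GK.
by apply/bigcapsP => m /(subsetP GKt); rewrite inE => /andP[].
Qed.

Lemma hset_Kth k G : G \in Kth K (col_set k) (h (col_set k)) ->
  hset k :&: capG G = col_set k /\ hset k :\: capG G = h (col_set k).
Proof.
case/Kth_cap => _ tG hG; rewrite /hset setIUl setDUl hG setU0 (setIidPl tG).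
split => //; have /eqP -> : col_set k :\: capG G == set0 by rewrite setD_eq0.
by rewrite set0U; apply/setDidPl; rewrite -setI_eq0 hG.
Qed.

Section TopColumn.
Variable k0 : colT r I.
Hypothesis w_k0 : w k0 != 0.
Hypothesis k0_max : forall k, w k != 0 -> (rk (col_set k) <= rk (col_set k0))%N.
Local Notation t0 := (col_set k0).

Definition is_top (i : ie_idx) :=
  if i is inl (k, G) then (k == k0) && (G \in Kth K t0 (h t0)) else false.

(* Only k0 and the subfamilies in K(t0, h t0) contribute to the coefficient of
   chi t0 (col_cat k0): by (iii), any other term supported on t0 would come
   from a column of larger rank than t0. *)
Lemma ie_term_at_top i : ie_coef i != 0 ->
  (ie_set i == t0) && [forall j in t0, col_cat k0 j == ie_cat i j] = is_top i.
Proof.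
case: i => [[k G]|k] /=; last first.
  by move=> _; case: eqP => // kt0; move: (col_set_in k); rewrite kt0 inE col_set_in.
rewrite /ie_coef; case: ifP => [sG|]; last by rewrite eqxx.
rewrite mulf_eq0 signr_eq0 /= mulf_eq0 negb_or => /andP[wk _].
case: (boolP (G \in Kth K (col_set k) (h (col_set k)))) => GK.
  have [-> _] := hset_Kth GK.
  apply/andP/andP => [[/eqP kt0 /forall_inP ag]|[/eqP kk0 _]]; last first.
    by subst; split => //; apply/forall_inP => j jt; rewrite spliceE jt.
  suff kk0 : k = k0 by subst.
  apply: col_inj => //; apply/forall_inP => j jt.
  by have := ag j; rewrite -kt0 spliceE jt eq_sym; apply.
have GB : G \in Kbar K (col_set k) (h (col_set k)).
  by case/andP: sG => GKp G0; rewrite [G \in Kbar _ _ _]inE GKp G0.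
have -> : (k == k0) && (G \in Kth K t0 (h t0)) = false.
  by case: eqP => // kk0; move: GK; rewrite kk0 => /negbTE.
case: eqP => //= top; have := Kbar_cap (col_set_in k) GB; rewrite /= setIC -/(hset k) top.
case=> [|[_]]; first by rewrite inE col_set_in.
by move=> lt; move: (k0_max wk); rewrite leqNgt lt.
Qed.

Lemma coef_top :
  coef ie_coef ie_set ie_cat t0 (col_cat k0) =
  \sum_(G in Kth K t0 (h t0)) ie_coef (inl (k0, G)).
Proof.
transitivity (\sum_(i | is_top i) ie_coef i).
  rewrite /coef [LHS]big_mkcond [RHS]big_mkcond; apply: eq_bigr => i _.
  have [-> |ci] := eqVneq (ie_coef i) 0; first by rewrite !if_same.
  by rewrite ie_term_at_top.
rewrite big_sumType /= [X in _ + X]big_pred0 // addr0.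
transitivity (\sum_(k | k == k0) \sum_(G in Kth K t0 (h t0)) ie_coef (inl (k, G))).
  by rewrite pair_big_dep; apply: eq_big => -[k G].
by rewrite big_pred1_eq.
Qed.

Lemma coef_topE : coef ie_coef ie_set ie_cat t0 (col_cat k0) =
  - (\sum_(G in Kth K t0 (h t0)) (-1) ^+ #|G| : int)%:~R * (w k0 * prob (h t0) (hcat k0)).
Proof.
rewrite coef_top rmorph_sum /= -sumrN mulr_suml; apply: eq_bigr => G GK.
have [sG _ _] := Kth_cap GK; have [_ ->] := hset_Kth GK.
by rewrite /ie_coef sG intr_sign exprS mulN1r.
Qed.

Lemma coef_top_neq0 : coef ie_coef ie_set ie_cat t0 (col_cat k0) != 0.
Proof.
have [hM _ _] := h_valid (col_set_in k0).
rewrite coef_topE !mulf_neq0 ?oppr_eq0 ?intr_eq0 ?Kth_sign_neq0 ?col_set_in //.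
by rewrite lt0r_neq0 ?prob_gt0.
Qed.

End TopColumn.

Lemma resid_weights_eq0 k : w k = 0.
Proof.
apply/eqP; apply: contraT => wk.
have [k0 wk0 k0_max] :=
  @arg_maxnP _ k (fun k => w k != 0) (fun k => rk (col_set k)) wk.
have t0V := I_V (col_set_in k0).
have := coef_eq0 ie_set_subM ie_cat_neq0 ie_expansion_cst (col_cat k0)
  (V_subM t0V) (V_neq0 t0V).
by move/eqP; rewrite (negbTE (coef_top_neq0 wk0 k0_max)).
Qed.

End Residual.

Local Notation GI := (@Gmx R d r M I).
Local Notation GR := (@Gmx R d r M Rf).
Local Notation GH := (@GHmx R d r M I h jh).

Lemma FRR_unit : GR^T *m Omega pi *m GR \in unitmx.
Proof.
apply: unitmx_ker0 => v Fv0.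
pose g x := (GR *m v) (enum_rank x) 0.
have gE : g =1 fun x => \sum_k v (enum_rank k) 0 * chi (col_set k) (col_cat k) x.
  by move=> x; apply: Gmx_mulE.
have g_cst x : g x = mean g.
  apply: cov_eq0_cst; rewrite (eq_covr _ gE) cov_sumr big1 // => k _.
  by rewrite covC -Gmx_cov mulmxA Fv0 mxE mulr0.
apply/matrixP => i j; rewrite ord1 mxE.
have R_subM (k : colT r Rf) : col_set k \subset M by exact/V_subM/R_V/col_set_in.
have kV := R_V (col_set_in (enum_val i)).
have comb_cst x : \sum_k v (enum_rank k) 0 * chi (col_set k) (col_cat k) x = mean g.
  by rewrite -gE g_cst.
have := coef_eq0 R_subM (@col_cat_neq0 _ _ _) comb_cst (col_cat (enum_val i))
  (V_subM kV) (V_neq0 kV).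
by rewrite coef_col enum_valK.
Qed.

Lemma Qmx_unit : Qmx pi I Rf h jh \in unitmx.
Proof.
apply: unitmx_ker0 => v Qv0.
pose b := invmx (GR^T *m Omega pi *m GR) *m (GR^T *m Omega pi *m GH *m v).
pose res := GH *m v - GR *m b.
have covI : GI^T *m Omega pi *m res = 0.
  by rewrite -Qv0 /Qmx /res /b mulmxBl mulmxBr !mulmxA.
have covR : GR^T *m Omega pi *m res = 0.
  by rewrite /res /b mulmxBr mulmxA [X in _ - X]mulmxA mulKVmx ?FRR_unit // subrr.
pose w k := v (enum_rank k) 0; pose be (k : colT r Rf) := b (enum_rank k) 0.
have resE : (fun x => res (enum_rank x) 0) =1 resid w be.
  by move=> x; rewrite /res /resid mxE [X in _ + X]mxE GHmx_mulE Gmx_mulE.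
have w0 := @resid_weights_eq0 w be.
apply/matrixP => i j; rewrite ord1 mxE -[i]enum_valK.
rewrite -/(w (enum_val i)) (w0 _ _ (enum_val i)) // => k.
  by rewrite -(eq_covr _ resE) -Gmx_cov covI mxE.
by rewrite -(eq_covr _ resE) -Gmx_cov covR mxE.
Qed.

End Replacement.
End Independence.

Theorem theorem2 (R : realFieldType) (d : nat) (r : 'I_d -> nat)
  (M : {set 'I_d}) (pi : cell r M -> R)
  (N : {set {set 'I_d}}) (a b : {set 'I_d}) (I : {set {set 'I_d}})
  (h : {set 'I_d} -> {set 'I_d}) (jh : {set 'I_d} -> assign r) :
  (forall x, 0 < pi x) ->
  \sum_x pi x = 1 ->
  (forall x : cell r M, pi x = \prod_(j in M) marg pi (val x j)) ->
  (forall n, n \in N -> n \proper M) ->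
  a \subset M -> b \subset M -> a != set0 -> b != set0 -> [disjoint a & b] ->
  I \subset Vfam N :&: Afam M a b ->
  valid_replacement M I (Vfam N :\: I) h jh ->
  Qmx pi I (Vfam N :\: I) h jh \in unitmx.
Proof.
move=> pi_gt0 pi_sum1 pi_indep N_proper _ _ _ _ _ I_sub.
case=> h_valid [Kth_sign_neq0 [rk [_ [_ Kbar_cap]]]].
have I_V : I \subset Vfam N by apply: subset_trans I_sub (subsetIl _ _).
by have := Qmx_unit pi_gt0 pi_sum1 pi_indep N_proper I_V h_valid Kth_sign_neq0 Kbar_cap.
Qed.
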